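(* Let $P$ be a distribution on $\mathcal{X}$, $R>0$, $K>0$. Then \[ E_c(P,R,K)=\min\Big\{\sup_{0\le\rho<1}\{E_0(-\rho,0,P)+\rho R\},\ \sup_{0\le\rho<1}\{E_0(-\rho,-\rho,P)+\rho(R+K)\}\Big\}, \] where \[ E_c(P,R,K)=\min_{TV}\Big\{D(TV\|PW)+\big|R-A_{TV}-|B_{TV}-K|^{+}\big|^{+}\Big\},\qquad E_0(\rho,\eta,P)=-\log\sum_y\Big[\sum_x P(x)W^{\frac{1+\eta}{1+\rho}}(y|x)\Big]^{1+\rho}. \]
   Context: $\mathcal{X},\mathcal{Y}$ are finite alphabets and $W(y|x)$ is a conditional distribution on $\mathcal{Y}$ given $\mathcal{X}$. Logs are natural. $TV$ is a joint distribution on $\mathcal{Y}\times\mathcal{X}$ with $\mathcal{Y}$-marginal $T$ and conditional $V(x|y)$, minimized over all such distributions; $PW$ is $P(x)W(y|x)$; $D(TV\|PW)=\sum T(y)V(x|y)\log\frac{T(y)V(x|y)}{P(x)W(y|x)}$; $A_{TV}=\sum T(y)V(x|y)\log\frac{V(x|y)}{P(x)}$; $B_{TV}=\mathbb{E}_{TV}[-\log W(Y|X)]$; $|t|^{+}=\max\{0,t\}$. *)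

From HB Require Import structures.
From mathcomp Require Import all_boot all_order all_algebra.
From mathcomp Require Import all_classical all_reals all_analysis.
Set Implicit Arguments. Unset Strict Implicit. Unset Printing Implicit Defensive.
Import Order.TTheory GRing.Theory Num.Theory.
Local Open Scope ring_scope.
Local Open Scope classical_set_scope.

Definition is_dist (R : realType) (T : finType) (p : T -> R) : Prop :=
  (forall t, 0 <= p t) /\ \sum_(t : T) p t = 1.

Definition pospart (R : realType) (t : R) : R := Num.max 0 t.

(* Channel W : X -> Y -> R, W x y = W(y|x).  Joint distribution TV on Y x X
   given by T : Y -> R (Y-marginal) and V : Y -> X -> R, V y x = V(x|y).
   Terms with T(y)V(x|y) = 0 contribute 0 (convention 0 log(.) = 0). *)
Definition divD (R : realType) (X Y : finType) (P : X -> R) (W : X -> Y -> R)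
  (T : Y -> R) (V : Y -> X -> R) : R :=
  \sum_(y : Y) \sum_(x : X)
    (if 0 < T y * V y x then T y * V y x * ln (T y * V y x / (P x * W x y)) else 0).

Definition A_TV (R : realType) (X Y : finType) (P : X -> R)
  (T : Y -> R) (V : Y -> X -> R) : R :=
  \sum_(y : Y) \sum_(x : X)
    (if 0 < T y * V y x then T y * V y x * ln (V y x / P x) else 0).

Definition B_TV (R : realType) (X Y : finType) (W : X -> Y -> R)
  (T : Y -> R) (V : Y -> X -> R) : R :=
  \sum_(y : Y) \sum_(x : X)
    (if 0 < T y * V y x then T y * V y x * (- ln (W x y)) else 0).

(* Those TV not
   absolutely continuous w.r.t. PW have D(TV||PW) = +oo and never attain the
   minimum, so the minimum is taken over TV << PW (where all terms are finite). *)
Definition Ec (R : realType) (X Y : finType) (P : X -> R) (W : X -> Y -> R)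
  (Rt K : R) : R :=
  inf [set e : R | exists (T : Y -> R) (V : Y -> X -> R),
         [/\ is_dist T, (forall y, is_dist (V y)),
             (forall y x, P x * W x y = 0 -> T y * V y x = 0) &
             e = divD P W T V + pospart (Rt - A_TV P T V - pospart (B_TV W T V - K))]].

Definition E0 (R : realType) (X Y : finType) (P : X -> R) (W : X -> Y -> R)
  (rho eta : R) : R :=
  - ln (\sum_(y : Y) (\sum_(x : X) P x * W x y `^ ((1 + eta) / (1 + rho))) `^ (1 + rho)).

(* For a joint distribution TV, 0 <= rho < 1 and any s, the log-sum (Gibbs) inequality,
   applied first to each V(.|y) and then to T, gives
     D(TV||PW) - rho (A_TV + s B_TV) >= E_0(-rho, -s rho, P),
   with equality for the tilted distribution V(x|y) ~ P(x) W(y|x)^((1 - s rho)/(1 - rho)),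
   T(y) ~ (sum_x P(x) W(y|x)^((1 - s rho)/(1 - rho)))^(1 - rho).  Taking s = 0 when
   B_TV <= K and s = 1 otherwise bounds E_c from below by the minimum of the two suprema.
   Conversely, for 0 <= s <= 1 the objective at TV is at most
   D(TV||PW) + |R + s K - A_TV - s B_TV|^+.  Along the tilted family the rate A_TV + s B_TV
   is nonnegative and continuous in rho.  If it is at least R + s K somewhere, then at
   rho = 0 or, by the intermediate value theorem, at a point where it equals R + s K, the
   objective is at most E_0(-rho, -s rho, P) + rho (R + s K); if it stays below, the excess
   is at most (1 - rho)(R + s K), which vanishes as rho -> 1. *)

From HB Require Import structures.
From mathcomp Require Import all_boot all_order all_algebra.
From mathcomp Require Import all_classical all_reals all_analysis.
From mathcomp Require Import ring lra.
Set Implicit Arguments. Unset Strict Implicit. Unset Printing Implicit Defensive.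
Import Order.TTheory GRing.Theory Num.Theory.
Import numFieldNormedType.Exports.
Local Open Scope ring_scope.
Local Open Scope classical_set_scope.

Section RealFacts.
Variable R : realType.
Implicit Types r t u : R.

Lemma ln_le_subr1 t : 0 < t -> ln t <= t - 1.
Proof. by move=> t0; have := @le_ln1Dx R (t - 1); rewrite addrCA subrr addr0; apply; lra. Qed.

Lemma psumr_gt0 (I : finType) (c : I -> R) i :
  (forall j, 0 <= c j) -> 0 < c i -> 0 < \sum_j c j.
Proof. by move=> c0 ci; rewrite (bigD1 i) //= ltr_wpDr // sumr_ge0. Qed.

Lemma pospart_id t : 0 <= t -> pospart t = t.
Proof. by move=> t0; rewrite /pospart max_r. Qed.

Lemma pospart_eq0 t : t <= 0 -> pospart t = 0.
Proof. by move=> t0; rewrite /pospart max_l. Qed.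

Lemma le_pospart t u : t <= u -> pospart t <= pospart u.
Proof. by move=> tu; rewrite /pospart ge_max !le_max lexx tu orbT. Qed.

Lemma mulr_le_pospart r t : 0 <= r <= 1 -> r * t <= pospart t.
Proof.
case/andP=> r0 r1; rewrite /pospart le_max; have [t0|t0] := leP 0 t.
  by rewrite ler_piMl ?orbT.
by rewrite mulr_ge0_le0 // ltW.
Qed.

Lemma continuous_sum (I : Type) (s : seq I) (p : pred I) (f : I -> R -> R) r :
  (forall i, p i -> {for r, continuous (f i)}) ->
  {for r, continuous (fun u => \sum_(i <- s | p i) f i u)}.
Proof.
move=> fc; rewrite -fct_sumE; elim/big_ind: _ => //; first exact: cst_continuous.
by move=> g h gc hc; apply: continuousD.
Qed.

Lemma le_of_tradeoff (A : R -> R) (m S Rr : R) : 0 < Rr ->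
  (forall r, 0 <= r < 1 -> 0 <= A r) ->
  (forall r, 0 <= r < 1 -> {for r, continuous A}) ->
  (forall r, 0 <= r < 1 -> m <= S + r * (A r - Rr) + pospart (Rr - A r)) ->
  m <= S.
Proof.
move=> Rr0 A0 Acont hm; have I0 : 0 <= (0 : R) < 1 by rewrite lexx ltr01.
have [[r1 /andP[r10 r11] Ar1] | Alt] := pselect (exists2 r, 0 <= r < 1 & Rr <= A r).
  have [RA0|AR0] := leP Rr (A 0).
    by have := hm 0 I0; rewrite mul0r addr0 pospart_eq0 ?addr0 // subr_le0.
  have Icont : {within `[0, r1], continuous A}.
    apply: continuous_in_subspaceT => x; rewrite inE /= in_itv /= => /andP[x0 x1].
    by apply: Acont; rewrite x0 (le_lt_trans x1).
  have [|c] := IVT r10 Icont (v := Rr); first by rewrite ge_min le_max (ltW AR0) Ar1 orbT.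
  rewrite in_itv /= => /andP[c0 c1] AcR.
  have := hm c; rewrite c0 (le_lt_trans c1) // AcR subrr mulr0 addr0.
  by rewrite pospart_eq0 ?addr0 //; apply.
apply/ler_addgt0Pr => e e0; pose r := Num.max 0 (1 - e / Rr).
have eR : 0 < e / Rr by rewrite divr_gt0.
have Ir : 0 <= r < 1 by rewrite le_max lexx gt_max ltr01 /=; lra.
have ARr : A r < Rr by rewrite ltNge; apply/negP => RA; apply: Alt; exists r.
have er : (1 - r) * Rr <= e.
  rewrite -[e](divfK (lt0r_neq0 Rr0)) ler_pM2r // lerBlDr -lerBlDl.
  by rewrite le_max lexx orbT.
have := hm r Ir; rewrite pospart_id ?subr_ge0 ?(ltW ARr) //.
have : (1 - r) * (Rr - A r) <= (1 - r) * Rr by rewrite ler_wpM2l ?gerBl ?A0 //; lra.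
lra.
Qed.

End RealFacts.

Section WeightedMean.
Variables (R : realType) (I : finType).
Implicit Types (q c f g : I -> R).

Definition mean q f := \sum_i (if 0 < q i then q i * f i else 0).

Lemma dist_exists_gt0 q : is_dist q -> exists i, 0 < q i.
Proof.
case=> q0 q1; apply/existsP; apply: contraT; rewrite negb_exists => /forallP qle0.
have : \sum_i q i <= 0 by apply: sumr_le0 => i _; rewrite leNgt qle0.
by rewrite q1 ler10.
Qed.

Lemma eq_mean q f g : (forall i, 0 < q i -> f i = g i) -> mean q f = mean q g.
Proof. by move=> fg; apply: eq_bigr => i _; case: ifP => // /fg ->. Qed.

Lemma ler_mean q f g : (forall i, 0 < q i -> f i <= g i) -> mean q f <= mean q g.
Proof. by move=> fg; apply: ler_sum => i _; case: ifP => // qi; rewrite ler_pM2l // fg. Qed.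

Lemma mean_ge0 q f : (forall i, 0 < q i -> 0 <= f i) -> 0 <= mean q f.
Proof.
by move=> f0; apply: sumr_ge0 => i _; case: ifP => // qi; apply: mulr_ge0 (ltW qi) (f0 _ qi).
Qed.

Lemma mean_affine q k a f : is_dist q ->
  mean q (fun i => k + a * f i) = k + a * mean q f.
Proof.
case=> q0 q1; have q1' : \sum_i (if 0 < q i then q i else 0) = 1.
  rewrite -q1; apply: eq_bigr => i _; case: ifP => // /negbT; rewrite -leNgt => qi.
  by apply/esym/eqP; rewrite eq_le qi q0.
rewrite /mean mulr_sumr -[X in X + _]mulr1 -q1' mulr_sumr -big_split /=.
by apply: eq_bigr => i _; case: ifP => _; rewrite ?mulr0 ?addr0 // mulrDr [q i * k]mulrC mulrCA.
Qed.

Lemma mean_cst q k : is_dist q -> mean q (fun=> k) = k.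
Proof.
move=> qd; rewrite -[RHS]addr0 -(mul0r (mean q (fun=> 0))) -mean_affine //.
by apply: eq_mean => i _; rewrite mul0r addr0.
Qed.

Lemma gibbs q c : is_dist q -> (forall i, 0 <= c i) -> (forall i, 0 < q i -> 0 < c i) ->
  - ln (\sum_i c i) <= mean q (fun i => ln (q i / c i)).
Proof.
move=> qd c0 qc; have [i qi] := dist_exists_gt0 qd; case: (qd) => q0 q1.
have C0 : 0 < \sum_i c i := psumr_gt0 c0 (qc i qi).
set C := \sum_i c i in C0 *.
(* [ln t <= t - 1] at [t = c j / (q j * C)], multiplied by [q j] *)
have term j : q j - c j / C - q j * ln C <= (if 0 < q j then q j * ln (q j / c j) else 0).
  case: ifP => [qj|]; last first.
    move/negbT; rewrite -leNgt => qj; have -> : q j = 0 by apply/eqP; rewrite eq_le qj q0.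
    by rewrite !mul0r subr0 sub0r oppr_le0 divr_ge0 // ltW.
  have cj := qc j qj.
  have qt : q j * (c j / (q j * C)) = c j / C by field; rewrite !lt0r_neq0.
  have lnt : ln (c j / (q j * C)) = ln (c j) - ln (q j) - ln C.
    by rewrite ln_div ?lnM ?posrE ?mulr_gt0 // opprD addrA.
  have := ler_wpM2l (ltW qj) (ln_le_subr1 (divr_gt0 cj (mulr_gt0 qj C0))).
  by rewrite lnt !mulrBr mulr1 qt ln_div ?posrE //; lra.
apply: le_trans (ler_sum _ (fun j _ => term j)).
by rewrite !sumrB -!mulr_suml q1 divff ?gt_eqF // mul1r subrr sub0r.
Qed.

End WeightedMean.

Section JointMean.
Variables (R : realType) (X Y : finType).
Implicit Types (T : Y -> R) (V : Y -> X -> R) (phi psi c : Y -> X -> R).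

Definition jmean T V phi :=
  \sum_y \sum_x (if 0 < T y * V y x then T y * V y x * phi y x else 0).

Lemma eq_jmean T V phi psi : (forall y x, 0 < T y * V y x -> phi y x = psi y x) ->
  jmean T V phi = jmean T V psi.
Proof.
by move=> e; apply: eq_bigr => y _; apply: eq_bigr => x _; case: ifP => // /e ->.
Qed.

Lemma jmeanD T V phi psi k :
  jmean T V phi + k * jmean T V psi = jmean T V (fun y x => phi y x + k * psi y x).
Proof.
rewrite /jmean mulr_sumr -big_split; apply: eq_bigr => y _ /=.
rewrite mulr_sumr -big_split; apply: eq_bigr => x _ /=.
by case: ifP => _; rewrite ?mulr0 ?addr0 // mulrDr mulrCA.
Qed.

Lemma jmean_iter T V phi : (forall y, 0 <= T y) -> (forall y x, 0 <= V y x) ->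
  jmean T V phi = mean T (fun y => mean (V y) (phi y)).
Proof.
move=> T0 V0; apply: eq_bigr => y _; case: ifPn => [Ty|].
  rewrite mulr_sumr; apply: eq_bigr => x _; rewrite pmulr_rgt0 //.
  by case: ifP => _; rewrite ?mulr0 ?mulrA.
rewrite -leNgt => Ty; have -> : T y = 0 by apply/eqP; rewrite eq_le Ty T0.
by apply: big1 => x _; rewrite mul0r ltxx.
Qed.

Lemma jmean_cst T V k : is_dist T -> (forall y, is_dist (V y)) ->
  jmean T V (fun _ _ => k) = k.
Proof.
move=> Td Vd; rewrite jmean_iter; [|by case: Td|by move=> y; case: (Vd y)].
by rewrite -[RHS](mean_cst k Td); apply: eq_mean => y _; apply: mean_cst.
Qed.

Lemma jgibbs T V c a : is_dist T -> (forall y, is_dist (V y)) ->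
  (forall y x, 0 <= c y x) -> (forall y x, 0 < T y * V y x -> 0 < c y x) -> 0 <= a ->
  - ln (\sum_y (\sum_x c y x) `^ a) <=
  jmean T V (fun y x => ln (T y) + a * ln (V y x / c y x)).
Proof.
move=> Td Vd c0 cpos a0; have [T0 _] := Td.
have Cpos y : 0 < T y -> 0 < \sum_x c y x.
  move=> Ty; have [x Vx] := dist_exists_gt0 (Vd y).
  exact: psumr_gt0 (c0 y) (cpos y x (mulr_gt0 Ty Vx)).
rewrite jmean_iter //; last by move=> y; case: (Vd y).
apply: le_trans (gibbs Td _ _) _ => [y|y Ty|]; rewrite ?powR_ge0 ?powR_gt0 ?Cpos //.
apply: ler_mean => y Ty; rewrite mean_affine // ln_div ?posrE ?powR_gt0 ?Cpos //.
rewrite ln_powR lerD2l -mulrN ler_wpM2l //.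
by apply: gibbs => // x Vx; apply: cpos y x (mulr_gt0 Ty Vx).
Qed.

End JointMean.

Section Channel.
Variables (R : realType) (X Y : finType) (P : X -> R) (W : X -> Y -> R).
Hypotheses (HW : forall x, is_dist (W x)) (HP : is_dist P).
Implicit Types (T : Y -> R) (V : Y -> X -> R).

Definition supp x y := 0 < P x * W x y.

Definition reach y := [exists x, supp x y].

Definition feasible T V := [/\ is_dist T, forall y, is_dist (V y) &
  forall y x, P x * W x y = 0 -> T y * V y x = 0].

Definition rate sigma T V := A_TV P T V + sigma * B_TV W T V.

Definition tilt_kernel rho sigma y x := P x * W x y `^ ((1 - sigma * rho) / (1 - rho)).

Lemma supp_gt0 x y : supp x y -> 0 < P x /\ 0 < W x y.
Proof.
have [[P0 _] [W0 _]] := (HP, HW x); rewrite /supp => PW.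
by split; rewrite lt_def ?P0 ?W0 andbT; apply: contraTneq PW => ->; rewrite ?mul0r ?mulr0 ltxx.
Qed.

Lemma W_le1 x y : W x y <= 1.
Proof. by have [W0 <-] := HW x; rewrite (bigD1 y) //= lerDl sumr_ge0. Qed.

Lemma feasible_supp T V y x : feasible T V -> 0 < T y * V y x ->
  [/\ supp x y, 0 < T y & 0 < V y x].
Proof.
case=> [[T0 _] Vd PW0] TV; have [V0 _] := Vd y; split.
- rewrite /supp lt_def mulr_ge0 ?andbT; [|by case: HP|by case: (HW x)].
  by apply/eqP => /PW0 TV0; rewrite TV0 ltxx in TV.
- by rewrite lt_def T0 andbT; apply: contraTneq TV => ->; rewrite mul0r ltxx.
- by rewrite lt_def V0 andbT; apply: contraTneq TV => ->; rewrite mulr0 ltxx.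
Qed.

Lemma rateE sigma T V :
  rate sigma T V = jmean T V (fun y x => ln (V y x / P x) + sigma * - ln (W x y)).
Proof. exact: jmeanD. Qed.

Lemma divD_sub_rate T V rho sigma : feasible T V -> rho < 1 ->
  divD P W T V - rho * rate sigma T V =
  jmean T V (fun y x => ln (T y) + (1 - rho) * ln (V y x / tilt_kernel rho sigma y x)).
Proof.
move=> F r1; rewrite rateE -mulNr; apply: etrans (jmeanD _ _ _ _ _) _.
apply: eq_jmean => y x /(feasible_supp F) [/supp_gt0 [Px Wxy] Ty Vyx].
rewrite /tilt_kernel !ln_div ?lnM ?ln_powR ?posrE ?mulr_gt0 ?powR_gt0 //.
by field; rewrite subr_eq0 gt_eqF.
Qed.

Lemma kernel_ge0 rho sigma y x : 0 <= tilt_kernel rho sigma y x.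
Proof. by rewrite mulr_ge0 ?powR_ge0 //; case: HP. Qed.

Lemma kernel_gt0 rho sigma y x : supp x y -> 0 < tilt_kernel rho sigma y x.
Proof. by case/supp_gt0 => Px Wxy; rewrite mulr_gt0 ?powR_gt0. Qed.

Lemma E0_kernel rho sigma : E0 P W (- rho) (- (sigma * rho)) =
  - ln (\sum_y (\sum_x tilt_kernel rho sigma y x) `^ (1 - rho)).
Proof. by []. Qed.

Lemma E0_le_divD T V rho sigma Rr : feasible T V -> 0 <= rho < 1 ->
  E0 P W (- rho) (- (sigma * rho)) + rho * Rr <= divD P W T V + pospart (Rr - rate sigma T V).
Proof.
move=> F /andP[r0 r1]; have [Td Vd _] := F.
have pos y x : 0 < T y * V y x -> 0 < tilt_kernel rho sigma y x.
  by case/(feasible_supp F) => xy _ _; apply: kernel_gt0.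
have a0 : 0 <= 1 - rho by lra.
have := jgibbs Td Vd (@kernel_ge0 rho sigma) pos a0.
rewrite -E0_kernel -divD_sub_rate //.
have rho01 : 0 <= rho <= 1 by rewrite r0 ltW.
by have := mulr_le_pospart (Rr - rate sigma T V) rho01; lra.
Qed.

Lemma A_TV_ge0 T V : feasible T V -> 0 <= A_TV P T V.
Proof.
move=> F; have [Td Vd _] := F; have [T0 _] := Td; have [_ P1] := HP.
rewrite (_ : A_TV P T V = jmean T V (fun y x => ln (V y x / P x))) // jmean_iter //;
  last by move=> y; case: (Vd y).
apply: mean_ge0 => y Ty; apply: le_trans (_ : 0 <= - ln (\sum_x P x)) (gibbs (Vd y) _ _).
- by rewrite P1 ln1 oppr0.
- by case: HP.
- by move=> x Vx; have [/supp_gt0[]] := feasible_supp F (mulr_gt0 Ty Vx).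
Qed.

Lemma B_TV_ge0 T V : 0 <= B_TV W T V.
Proof.
apply: sumr_ge0 => y _; apply: sumr_ge0 => x _; case: ifP => // TV.
by apply: mulr_ge0; [exact: ltW | rewrite oppr_ge0 ln_le0 // W_le1].
Qed.

Lemma rate_ge0 sigma T V : feasible T V -> 0 <= sigma -> 0 <= rate sigma T V.
Proof. by move=> F s0; rewrite addr_ge0 ?mulr_ge0 ?A_TV_ge0 ?B_TV_ge0. Qed.

Lemma reach_supp x y : supp x y -> reach y.
Proof. by move=> xy; apply/existsP; exists x. Qed.

Lemma exists_reach : exists y, reach y.
Proof.
have [x Px] := dist_exists_gt0 HP; have [y Wxy] := dist_exists_gt0 (HW x).
by exists y; apply: (@reach_supp x); rewrite /supp mulr_gt0.
Qed.

Section Tilted.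
Variable sigma : R.
Hypothesis sigma01 : 0 <= sigma <= 1.

Definition mass rho y := \sum_(x | supp x y) tilt_kernel rho sigma y x.

(* [mass rho y `^ (1 - rho)], written so as to be visibly continuous in [rho] *)
Definition weight rho y := if reach y then expR ((1 - rho) * ln (mass rho y)) else 0.

Definition tiltT rho y := weight rho y / \sum_y' weight rho y'.

(* [tiltT rho y = 0] unless [reach y], so any distribution will do for [V y] there *)
Definition tiltV rho y x :=
  if reach y then (if supp x y then tilt_kernel rho sigma y x else 0) / mass rho y
  else P x.

Lemma mass_gt0 rho y : reach y -> 0 < mass rho y.
Proof.
case/existsP => x xy; rewrite /mass (bigD1 x) //= ltr_wpDr ?kernel_gt0 //.
by apply: sumr_ge0 => *; apply: kernel_ge0.
Qed.

Lemma weight_ge0 rho y : 0 <= weight rho y.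
Proof. by rewrite /weight; case: ifP => // _; apply: ltW; apply: expR_gt0. Qed.

Lemma weight_gt0 rho y : reach y -> 0 < weight rho y.
Proof. by rewrite /weight => ->; apply: expR_gt0. Qed.

Lemma sum_weight_gt0 rho : 0 < \sum_y weight rho y.
Proof.
by have [y ry] := exists_reach; apply: psumr_gt0 (weight_ge0 rho) (weight_gt0 rho ry).
Qed.

Lemma tilt_feasible rho : feasible (tiltT rho) (tiltV rho).
Proof.
have Z0 := sum_weight_gt0 rho; split.
- split=> [y|]; first by rewrite divr_ge0 ?weight_ge0 ?ltW.
  by rewrite -mulr_suml divff ?gt_eqF.
- move=> y; rewrite /tiltV; have [ry|_] := boolP (reach y); last exact: HP.
  have m0 := mass_gt0 rho ry; split=> [x|].
    by rewrite divr_ge0 ?(ltW m0) //; case: ifP => _ //; apply: kernel_ge0.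
  rewrite -mulr_suml (_ : \sum_x _ = mass rho y) ?divff ?gt_eqF //.
  by rewrite /mass [RHS]big_mkcond.
- move=> y x PW0; have nxy : supp x y = false by rewrite /supp PW0 ltxx.
  rewrite /tiltV nxy; have [ry|nry] := boolP (reach y); first by rewrite mul0r mulr0.
  by rewrite /tiltT /weight (negbTE nry) !mul0r.
Qed.

Lemma tilt_supp rho y x : (0 < tiltT rho y * tiltV rho y x) = supp x y.
Proof.
rewrite /tiltT /tiltV; have [ry|nry] := boolP (reach y); last first.
  rewrite /weight (negbTE nry) !mul0r ltxx; apply/esym/negbTE.
  by apply: contra nry; apply: reach_supp.
rewrite pmulr_rgt0; last by rewrite divr_gt0 ?weight_gt0 ?sum_weight_gt0.
rewrite pmulr_lgt0 ?invr_gt0 ?mass_gt0 //.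
by have [xy|] := boolP (supp x y); rewrite ?kernel_gt0 ?ltxx.
Qed.

Lemma kernel_eq0 rho y x : 0 <= rho < 1 -> ~~ supp x y -> tilt_kernel rho sigma y x = 0.
Proof.
case/andP=> r0 r1 nxy; have [[P0 _] [W0 _]] := (HP, HW x).
have /eqP : P x * W x y = 0 by apply/eqP; rewrite eq_le mulr_ge0 // andbT leNgt.
rewrite mulf_eq0 => /orP[/eqP Px|/eqP Wxy]; first by rewrite /tilt_kernel Px mul0r.
have [_ s1] := andP sigma01.
rewrite /tilt_kernel Wxy powR0 ?mulr0 // gt_eqF // divr_gt0 ?subr_gt0 //.
by rewrite (le_lt_trans _ r1) // ler_piMl.
Qed.

Lemma E0_tilt rho : 0 <= rho < 1 -> E0 P W (- rho) (- (sigma * rho)) = - ln (\sum_y weight rho y).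
Proof.
move=> Ir; have [_ r1] := andP Ir; rewrite E0_kernel; congr (- ln _); apply: eq_bigr => y _.
have -> : \sum_x tilt_kernel rho sigma y x = mass rho y.
  rewrite /mass [RHS]big_mkcond; apply: eq_bigr => x _.
  by have [//|nxy] := boolP (supp x y); apply: kernel_eq0.
rewrite /weight; have [ry|nry] := boolP (reach y); first by rewrite /powR gt_eqF ?mass_gt0.
rewrite /mass big_pred0 => [|x]; last by apply: contraNF nry; apply: reach_supp.
by rewrite powR0 // subr_eq0 gt_eqF.
Qed.

Lemma tilt_optimal rho : 0 <= rho < 1 ->
  divD P W (tiltT rho) (tiltV rho) - rho * rate sigma (tiltT rho) (tiltV rho) =
  E0 P W (- rho) (- (sigma * rho)).
Proof.
move=> Ir; have [_ r1] := andP Ir; have F := tilt_feasible rho; have [Td Vd _] := F.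
rewrite divD_sub_rate // E0_tilt // -(jmean_cst (- ln (\sum_y weight rho y)) Td Vd).
apply: eq_jmean => y x; rewrite tilt_supp => xy; have ry := reach_supp xy.
have [m0 k0] := (mass_gt0 rho ry, kernel_gt0 rho sigma xy).
rewrite /tiltT /tiltV ry xy {1}/weight ry.
have -> : tilt_kernel rho sigma y x / mass rho y / tilt_kernel rho sigma y x = (mass rho y)^-1.
  by field; rewrite !gt_eqF.
rewrite ln_div ?posrE ?expR_gt0 ?sum_weight_gt0 // expRK lnV ?posrE //; lra.
Qed.

Lemma kernel_continuous r0 y x : r0 < 1 -> supp x y ->
  {for r0, continuous (fun r => tilt_kernel r sigma y x)}.
Proof.
move=> r1 /supp_gt0[Px Wxy]; rewrite /tilt_kernel /powR gt_eqF //.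
apply: continuousM; first exact: cst_continuous.
apply: (@continuous_comp R R R (fun r => (1 - sigma * r) / (1 - r) * ln (W x y)) expR);
  last exact: continuous_expR.
apply: continuousM; last exact: cst_continuous.
apply: continuousM.
  apply: continuousB; first exact: cst_continuous.
  by apply: continuousM; [exact: cst_continuous | exact: cvg_id].
apply: continuousV; first by rewrite subr_eq0 gt_eqF.
by apply: continuousB; [exact: cst_continuous | exact: cvg_id].
Qed.

Lemma mass_continuous r0 y : r0 < 1 -> {for r0, continuous (fun r => mass r y)}.
Proof. by move=> r1; apply: continuous_sum => x; apply: kernel_continuous. Qed.

Lemma weight_continuous r0 y : r0 < 1 -> {for r0, continuous (fun r => weight r y)}.
Proof.
move=> r1; rewrite /weight; have [ry|_] := boolP (reach y); last exact: cst_continuous.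
apply: (@continuous_comp R R R (fun r => (1 - r) * ln (mass r y)) expR);
  last exact: continuous_expR.
apply: continuousM; first by apply: continuousB; [exact: cst_continuous | exact: cvg_id].
apply: (@continuous_comp R R R (fun r => mass r y) (@ln R)); first exact: mass_continuous.
exact/continuous_ln/mass_gt0.
Qed.

Lemma tiltT_continuous r0 y : r0 < 1 -> {for r0, continuous (fun r => tiltT r y)}.
Proof.
move=> r1; apply: continuousM; first exact: weight_continuous.
apply: continuousV; first by rewrite gt_eqF ?sum_weight_gt0.
by apply: continuous_sum => y' _; apply: weight_continuous.
Qed.

Lemma tiltV_gt0 rho y x : supp x y -> 0 < tiltV rho y x.
Proof.
by move=> xy; rewrite /tiltV (reach_supp xy) xy divr_gt0 ?kernel_gt0 ?mass_gt0 ?(reach_supp xy).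
Qed.

Lemma tiltV_continuous r0 y x : r0 < 1 -> supp x y ->
  {for r0, continuous (fun r => tiltV r y x)}.
Proof.
move=> r1 xy; rewrite /tiltV (reach_supp xy) xy.
apply: continuousM; first exact: kernel_continuous.
apply: continuousV; first by rewrite gt_eqF ?mass_gt0 ?(reach_supp xy).
exact: mass_continuous.
Qed.

Lemma rate_tilt_continuous r0 : r0 < 1 ->
  {for r0, continuous (fun r => rate sigma (tiltT r) (tiltV r))}.
Proof.
move=> r1; have -> : (fun r => rate sigma (tiltT r) (tiltV r)) = fun r =>
    \sum_y \sum_(x | supp x y) tiltT r y * tiltV r y x *
      (ln (tiltV r y x / P x) + sigma * - ln (W x y)).
  apply: funext => r; rewrite rateE /jmean; apply: eq_bigr => y _.
  by rewrite [RHS]big_mkcond; apply: eq_bigr => x _; rewrite tilt_supp.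
apply: continuous_sum => y _; apply: continuous_sum => x xy.
have [Px _] := supp_gt0 xy.
apply: continuousM.
  by apply: continuousM; [exact: tiltT_continuous | exact: tiltV_continuous].
apply: continuousD; last exact: cst_continuous.
apply: (@continuous_comp R R R (fun r => tiltV r y x / P x) (@ln R)).
  by apply: continuousM; [exact: tiltV_continuous | exact: cst_continuous].
by apply: continuous_ln; rewrite divr_gt0 ?tiltV_gt0.
Qed.

End Tilted.

Section Exponent.
Variables (Rt K : R).
Hypotheses (Rt0 : 0 < Rt) (K0 : 0 < K).

Definition rate_set sigma := [set E0 P W (- rho) (- (sigma * rho)) + rho * (Rt + sigma * K)
  | rho in [set r : R | 0 <= r < 1]].

Lemma rate_set_ubound sigma : has_ubound (rate_set sigma).
Proof.
exists (divD P W (tiltT 0 0) (tiltV 0 0) +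
        pospart (Rt + sigma * K - rate sigma (tiltT 0 0) (tiltV 0 0))).
by move=> _ [rho Ir <-]; apply: E0_le_divD (tilt_feasible 0 0) Ir.
Qed.

Lemma sup_rate_le sigma T V : feasible T V ->
  sup (rate_set sigma) <= divD P W T V + pospart (Rt + sigma * K - rate sigma T V).
Proof.
move=> F; apply: ge_sup => [|_ [rho Ir <-]]; last exact: E0_le_divD.
by exists (E0 P W (- 0) (- (sigma * 0)) + 0 * (Rt + sigma * K)), 0; rewrite //= lexx ltr01.
Qed.

Lemma value_ge_min T V : feasible T V ->
  Num.min (sup (rate_set 0)) (sup (rate_set 1)) <=
  divD P W T V + pospart (Rt - A_TV P T V - pospart (B_TV W T V - K)).
Proof.
move=> F; rewrite ge_min; have [BK|KB] := leP (B_TV W T V) K.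
  apply/orP; left; apply: le_trans (sup_rate_le 0 F) _.
  have -> : pospart (B_TV W T V - K) = 0 by apply: pospart_eq0; rewrite subr_le0.
  by rewrite subr0 /rate !mul0r !addr0.
have -> : Rt - A_TV P T V - pospart (B_TV W T V - K) = Rt + 1 * K - rate 1 T V.
  by rewrite pospart_id ?subr_ge0 ?ltW // /rate !mul1r; lra.
by apply/orP; right; apply: sup_rate_le.
Qed.

Lemma Ec_le_value T V : feasible T V ->
  Ec P W Rt K <= divD P W T V + pospart (Rt - A_TV P T V - pospart (B_TV W T V - K)).
Proof.
move=> F; have [Td Vd PW0] := F; rewrite /Ec; apply: ge_inf; last by exists T, V.
exists (Num.min (sup (rate_set 0)) (sup (rate_set 1))).
by move=> _ [T' [V' [? ? ? ->]]]; apply: value_ge_min.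
Qed.

Lemma min_le_Ec : Num.min (sup (rate_set 0)) (sup (rate_set 1)) <= Ec P W Rt K.
Proof.
have [Td Vd PW0] := tilt_feasible 0 0.
apply: lb_le_inf; first by eexists; exists (tiltT 0 0), (tiltV 0 0).
by move=> _ [T [V [? ? ? ->]]]; apply: value_ge_min.
Qed.

Lemma Ec_le_rate_sup sigma : 0 <= sigma <= 1 -> Ec P W Rt K <= sup (rate_set sigma).
Proof.
move=> s01; have [s0 _] := andP s01.
apply: (le_of_tradeoff (A := fun r => rate sigma (tiltT sigma r) (tiltV sigma r))
  (Rr := Rt + sigma * K)) => [|r _|r /andP[_ r1]|r Ir]; cbv beta.
- by rewrite (lt_le_trans Rt0) // lerDl mulr_ge0 // ltW.
- exact: rate_ge0 (tilt_feasible sigma r) s0.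
- exact: rate_tilt_continuous.
set T := tiltT sigma r; set V := tiltV sigma r.
apply: le_trans (Ec_le_value (tilt_feasible sigma r)) _.
have sup_ge : E0 P W (- r) (- (sigma * r)) + r * (Rt + sigma * K) <= sup (rate_set sigma).
  by apply: (ub_le_sup (rate_set_ubound sigma)); exists r.
have value_le : pospart (Rt - A_TV P T V - pospart (B_TV W T V - K)) <=
                pospart (Rt + sigma * K - rate sigma T V).
  by apply: le_pospart; have := mulr_le_pospart (B_TV W T V - K) s01; rewrite /rate; lra.
by have := tilt_optimal s01 Ir; lra.
Qed.

End Exponent.

End Channel.

Theorem lemma9 (R : realType) (X Y : finType) (W : X -> Y -> R) (P : X -> R)
  (Rt K : R) :
  (forall x, is_dist (W x)) -> is_dist P -> 0 < Rt -> 0 < K ->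
  Ec P W Rt K =
  Num.min
    (sup [set E0 P W (- rho) 0 + rho * Rt | rho in [set r : R | 0 <= r < 1]])
    (sup [set E0 P W (- rho) (- rho) + rho * (Rt + K) | rho in [set r : R | 0 <= r < 1]]).
Proof.
move=> HW HP Rt0 K0.
have -> : [set E0 P W (- rho) 0 + rho * Rt | rho in [set r : R | 0 <= r < 1]] =
          rate_set P W Rt K 0.
  by apply: eq_imagel => r _; rewrite !mul0r oppr0 addr0.
have -> : [set E0 P W (- rho) (- rho) + rho * (Rt + K) | rho in [set r : R | 0 <= r < 1]] =
          rate_set P W Rt K 1.
  by apply: eq_imagel => r _; rewrite !mul1r.
apply/eqP; rewrite eq_le le_min (min_le_Ec HW HP) andbT.
by rewrite !(Ec_le_rate_sup HW HP Rt0 K0) // ?lexx ler01.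
Qed.
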